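(* Let $k\ge 0$ be an integer and let $G$ be a $(k+1)$-edge-connected graph with $m$ edges. Then \[f_2(M(G))\leq m-\frac{3(k+1)}{2}.\]
   Context: $M(G)$ is the cycle matroid of $G=(V,E)$: the matroid on $E$ with rank function $rk(A)=|V|-k(A)$, where $k(A)$ is the number of components of the spanning subgraph $(V,A)$; let $r=rk(E)$. A flat of $M(G)$ is a set $F\subseteq E$ with $F=\{e\in E: rk(F\cup\{e\})=rk(F)\}$, and $f_2(M(G))=\max\{|F|: F\text{ a flat of } M(G),\ rk(F)=r-2\}$. *)

(* A (multi)graph G = (V, E) is given by finite types V, E
   and endpoint maps src tgt : E -> V (loops and parallel edges allowed). *)
From mathcomp Require Import all_boot all_order all_algebra.
Set Implicit Arguments. Unset Strict Implicit. Unset Printing Implicit Defensive.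

Section Graph.
Variables (V E : finType) (src tgt : E -> V).

Definition adj (A : {set E}) : rel V := fun x y =>
  [exists e in A, ((src e == x) && (tgt e == y)) || ((src e == y) && (tgt e == x))].

Definition ncomp (A : {set E}) : nat := n_comp (adj A) [pred x : V | true].

(* rank function of the cycle matroid M(G): rk(A) = |V| - k(A) *)
Definition rk (A : {set E}) : nat := #|V| - ncomp A.

Definition rkE : nat := rk [set: E].

Definition is_flat (F : {set E}) : bool :=
  F == [set e | rk (e |: F) == rk F].

Definition f2 : nat := \max_(F : {set E} | is_flat F && (rk F + 2 == rkE)) #|F|.

Definition connectedG (A : {set E}) : bool := ncomp A == 1.

Definition edge_connected (l : nat) : Prop :=
  forall S : {set E}, #|S| < l -> connectedG (~: S).

End Graph.

(* Let F be a largest flat of rank r - 2. Since G is connected, r = |V| - 1,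
   so the spanning subgraph (V, F) has at least three components. The edges
   leaving any one component form a cut of G, hence number at least k + 1,
   and none of them lies in F. Every edge lies in at most two such cuts, so
   3 (k + 1) <= 2 |E \ F|, i.e. |F| <= m - 3 (k + 1) / 2. *)
From mathcomp Require Import all_boot all_order all_algebra.
From mathcomp Require Import zify lra.
Import Order.TTheory GRing.Theory Num.Theory.
Set Implicit Arguments. Unset Strict Implicit. Unset Printing Implicit Defensive.

Section CycleMatroid.
Variables (V E : finType) (src tgt : E -> V).

Local Notation adj := (adj src tgt).
Local Notation ncomp := (ncomp src tgt).
Local Notation croot A := (fingraph.root (adj A)).

Lemma adj_sym A : symmetric (adj A).
Proof.
move=> x y; apply/existsP/existsP => -[e /andP [eA He]];
  by exists e; rewrite eA orbC.
Qed.

Lemma adj_connect_sym A : connect_sym (adj A).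
Proof. exact/sym_connect_sym/adj_sym. Qed.

Lemma ncompE A : ncomp A = #|roots (adj A)|.
Proof. by apply: eq_card => x; rewrite !inE andbT. Qed.

Lemma connectedG_connect A x y : connectedG src tgt A -> connect (adj A) x y.
Proof.
rewrite /connectedG ncompE => /eqP roots1.
have /card_le1_eqP eq_roots : #|roots (adj A)| <= 1 by rewrite roots1.
apply/(fingraph.rootP (adj_connect_sym A)).
by apply: eq_roots; rewrite inE roots_root //; apply: adj_connect_sym.
Qed.

Lemma edge_connected_full l :
  edge_connected src tgt l.+1 -> ncomp [set: E] = 1.
Proof. by move=> /(_ set0); rewrite cards0 setC0 => /(_ isT) /eqP. Qed.

Definition boundary (F : {set E}) (r : V) : {set E} :=
  [set e | (croot F (src e) == r) != (croot F (tgt e) == r)].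

Lemma boundary_subsetC F r : boundary F r \subset ~: F.
Proof.
apply/subsetP => e; rewrite !inE; apply: contraNN => eF.
have /(fingraph.rootP (adj_connect_sym F)) -> : connect (adj F) (src e) (tgt e).
  by apply: connect1; apply/existsP; exists e; rewrite eF !eqxx.
by rewrite eqxx.
Qed.

Lemma boundary_closed F r :
  closed (adj (~: boundary F r)) [pred v | croot F v == r].
Proof.
move=> x y /existsP [e /andP []]; rewrite !inE negbK => /eqP same_side.
by case/orP => /andP [/eqP <- /eqP <-].
Qed.

Lemma edge_connected_boundary l F r r' :
  edge_connected src tgt l -> roots (adj F) r -> roots (adj F) r' -> r != r' ->
  l <= #|boundary F r|.
Proof.
move=> conn_l /eqP root_r /eqP root_r' neq_rr'; rewrite leqNgt.
apply/negP => /conn_l /(@connectedG_connect _ r r').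
move/(closed_connect (@boundary_closed F r)).
by rewrite !inE root_r root_r' eqxx eq_sym (negbTE neq_rr').
Qed.

Lemma sum_boundary_le F :
  \sum_(r in roots (adj F)) #|boundary F r| <= 2 * #|~: F|.
Proof.
rewrite -sum1_card big_distrr /=.
under eq_bigr do rewrite -sum1_card big_mkcond /=.
rewrite exchange_big /= [X in _ <= X]big_mkcond /=.
apply: leq_sum => e _; case: ifP => eF; last first.
  rewrite big1 // => r _; case: ifP => // /(subsetP (boundary_subsetC F r)).
  by rewrite eF.
set u := croot F (src e); set v := croot F (tgt e).
apply: (@leq_trans #|[set u; v]|); last by rewrite cards2; case: (u != v).
rewrite -sum1_card big_mkcond [X in _ <= X]big_mkcond /=.
apply: leq_sum => r _; case: (r \in _) => //; rewrite !inE -/u -/v.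
by rewrite ![r == _]eq_sym; case: (u == r); case: (v == r).
Qed.

Lemma ncomp_edge_connected_le l F :
  edge_connected src tgt l -> 2 <= ncomp F -> ncomp F * l <= 2 * #|~: F|.
Proof.
move=> conn_l two_comps; apply: leq_trans (sum_boundary_le F).
rewrite ncompE -sum_nat_const; apply: leq_sum => r root_r.
have [r' root_r' neq_rr'] : exists2 r', roots (adj F) r' & r != r'.
  apply/exists_inP; apply: contraTT two_comps.
  rewrite negb_exists_in ncompE -ltnNge ltnS => /forall_inP only_r.
  rewrite -(card1 r); apply/subset_leq_card/subsetP => x root_x.
  by rewrite inE eq_sym -[_ == _]negbK only_r.
exact: edge_connected_boundary conn_l root_r root_r' neq_rr'.
Qed.

Lemma rank_drop2_ncomp F :
  ncomp [set: E] = 1 -> rk src tgt F + 2 = rkE src tgt -> 3 <= ncomp F.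
Proof. by rewrite /rkE /rk => ->; lia. Qed.

Lemma f2_attained :
  (exists F, is_flat src tgt F && (rk src tgt F + 2 == rkE src tgt)) ->
  exists2 F, rk src tgt F + 2 = rkE src tgt & f2 src tgt = #|F|.
Proof.
case=> F0 F0_flat.
have flats_nonempty :
    0 < #|[pred F | is_flat src tgt F && (rk src tgt F + 2 == rkE src tgt)]|.
  by apply/card_gt0P; exists F0.
have [F /andP [_ /eqP rkF] f2F] :=
  eq_bigmax_cond (fun F : {set E} => #|F|) flats_nonempty.
by exists F.
Qed.

End CycleMatroid.

Local Open Scope ring_scope.

Theorem lemma3p6 (V E : finType) (src tgt : E -> V) (k : nat) :
  edge_connected src tgt k.+1 ->
  (exists F : {set E}, is_flat src tgt F && (rk src tgt F + 2 == rkE src tgt)%N) ->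
  ((f2 src tgt)%:R : rat) <= (#|E|)%:R - 3%:R * (k.+1)%:R / 2%:R.
Proof.
move=> conn /f2_attained [F rkF ->].
have three_comps := rank_drop2_ncomp (edge_connected_full conn) rkF.
have cut_bound := ncomp_edge_connected_le conn (ltnW three_comps).
have : (2 * #|F| + 3 * k.+1 <= 2 * #|E|)%N.
  by move: (cardsC F) (leq_mul three_comps (leqnn k.+1)) cut_bound; lia.
rewrite -(ler_nat rat) !natrD !natrM; lra.
Qed.
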